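(* Let $E_1$ be a Stone space with at least five points, let $k\in E_1$ be an isolated point, and let $E$ be the Stone space system $(E_1,\{k\})$. Then $\mathrm{Aut}(\mathscr{C}_w(E))\cong\mathrm{Aut}(\mathscr{C}(E_1))$ as groups.
   Context: A Stone space is a compact, Hausdorff, totally disconnected topological space. A cut of a Stone space $X$ is an unordered partition of $X$ into two disjoint clopen sets $U,V$, written $U\sqcup V$; it is non-peripheral if each of $U,V$ contains at least two points. Two cuts $U\sqcup V$, $U'\sqcup V'$ cross if all four sets $U\cap U'$, $U\cap V'$, $V\cap U'$, $V\cap V'$ are nonempty; otherwise they are compatible. The complex of cuts $\mathscr{C}(X)$ is the simplicial graph whose vertices are the non-peripheral cuts of $X$, with edges between distinct compatible cuts. A Stone space system is a properly nested collection of Stone spaces $E_n\subsetneq\cdots\subsetneq E_2\subsetneq E_1$, $n\ge 2$; a cut of the system is a cut of $E_1$. A cut $U\sqcup V$ of the system is weakly non-peripheral if each of $U$ and $V$ either contains at least two points or contains at least one point of $E_2$. The weak complex of cuts $\mathscr{C}_w(E)$ is the simplicial graph whose vertices are the weakly non-peripheral cuts, with an edge between distinct compatible cuts. *)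

From HB Require Import structures.
From mathcomp Require Import all_boot all_order.
From mathcomp Require Import all_classical all_reals all_analysis.
Set Implicit Arguments. Unset Strict Implicit. Unset Printing Implicit Defensive.
Local Open Scope classical_set_scope.

Definition stone_space (X : topologicalType) : Prop :=
  [/\ compact [set: X], hausdorff_space X & totally_disconnected [set: X]].

Definition is_cut {X : topologicalType} (P : set (set X)) : Prop :=
  exists U V : set X, [/\ P = [set U; V], clopen U, clopen V,
                          U `&` V = set0 & U `|` V = setT].

Definition has_two_points {X : Type} (A : set X) : Prop :=
  exists x y, [/\ x <> y, A x & A y].

Definition nonperipheral_cut {X : topologicalType} (P : set (set X)) : Prop :=
  is_cut P /\ forall A, P A -> has_two_points A.

Definition weakly_nonperipheral_cut {X : topologicalType} (E2 : set X)
  (P : set (set X)) : Prop :=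
  is_cut P /\ forall A, P A -> has_two_points A \/ exists x, E2 x /\ A x.

Definition cuts_cross {X : Type} (P Q : set (set X)) : Prop :=
  forall A B, P A -> Q B -> A `&` B !=set0.

Definition cuts_compatible {X : Type} (P Q : set (set X)) : Prop :=
  ~ cuts_cross P Q.

Definition cut_vertex (X : topologicalType) :=
  {P : set (set X) | nonperipheral_cut P}.
Definition wcut_vertex (X : topologicalType) (E2 : set X) :=
  {P : set (set X) | weakly_nonperipheral_cut E2 P}.

Definition cut_adj (X : topologicalType) (a b : cut_vertex X) : Prop :=
  a <> b /\ cuts_compatible (proj1_sig a) (proj1_sig b).
Definition wcut_adj (X : topologicalType) (E2 : set X)
  (a b : wcut_vertex E2) : Prop :=
  a <> b /\ cuts_compatible (proj1_sig a) (proj1_sig b).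

Definition graph_aut {V : Type} (adj : V -> V -> Prop) (f : V -> V) : Prop :=
  bijective f /\ forall a b, adj a b <-> adj (f a) (f b).

Definition aut_groups_isomorphic {V W : Type}
  (adjV : V -> V -> Prop) (adjW : W -> W -> Prop) : Prop :=
  exists Phi : (V -> V) -> (W -> W),
    [/\ (forall f, graph_aut adjV f -> graph_aut adjW (Phi f)),
        (forall f g, graph_aut adjV f -> graph_aut adjV g ->
                     Phi f = Phi g -> f = g),
        (forall h, graph_aut adjW h -> exists2 f, graph_aut adjV f & Phi f = h)
      & (forall f g, graph_aut adjV f -> graph_aut adjV g ->
                     Phi (f \o g) = Phi f \o Phi g)].

From HB Require Import structures.
From mathcomp Require Import all_boot all_order.
From mathcomp Require Import all_classical all_reals all_analysis.
Local Open Scope classical_set_scope.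

(* A cut with a singleton side crosses no cut, and the only weakly
   non-peripheral cut that is not non-peripheral is {k} | E1 - {k}: so the
   weak complex is the cone over C(E1) with this cut as apex.  In a Stone space
   a non-peripheral cut U | V is crossed by the cut A u B | rest, where A and B
   are proper nonempty clopen subsets of U and V; so C(E1) has no universal
   vertex, every automorphism of the cone fixes the apex, and restriction to
   the base is an isomorphism of automorphism groups. *)

Lemma graph_aut_can {V : Type} {adj : V -> V -> Prop} {f g : V -> V} :
  graph_aut adj f -> cancel f g -> cancel g f -> graph_aut adj g.
Proof.
move=> [_ adjf] fK gK; split; first by exists f.
by move=> a b; rewrite (adjf (g a)) !gK.
Qed.

Lemma graph_aut_comp {V : Type} {adj : V -> V -> Prop} {f g : V -> V} :
  graph_aut adj f -> graph_aut adj g -> graph_aut adj (f \o g).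
Proof.
move=> [bf adjf] [bg adjg]; split; first exact: bij_comp.
by move=> a b /=; rewrite adjg adjf.
Qed.

Section ConeOverGraph.
Context {V W : Type} {adjV : V -> V -> Prop} {adjW : W -> W -> Prop}.
Context {apex : V} {incl : W -> V}.
Hypothesis incl_inj : injective incl.
Hypothesis incl_neq_apex : forall a, incl a <> apex.
Hypothesis apex_or_incl : forall w, w = apex \/ exists a, w = incl a.
Hypothesis adj_incl : forall a b, adjV (incl a) (incl b) <-> adjW a b.
Hypothesis adj_apexl : forall w, adjV apex w <-> w <> apex.
Hypothesis adj_apexr : forall w, adjV w apex <-> w <> apex.
Hypothesis no_universal_vertex : forall a, exists2 b, b <> a & ~ adjW a b.

Lemma graph_aut_fix_apex f : graph_aut adjV f -> f apex = apex.
Proof.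
move=> [[g fK gK] adjf]; have [// | [a fapex]] := apex_or_incl (f apex).
have [b ba nadj_ab] := no_universal_vertex a.
have gb_apex : g (incl b) <> apex.
  by move=> gb; apply: ba; apply: incl_inj; rewrite -fapex -gb gK.
by case: nadj_ab; rewrite -adj_incl -fapex -[incl b]gK -adjf adj_apexl.
Qed.

(* The fallback [a] is junk: automorphisms fix [apex], hence preserve the base. *)
Definition cone_restr (f : V -> V) (a : W) : W :=
  match pselect (exists b, incl b = f (incl a)) with
  | left H => projT1 (cid H)
  | right _ => a
  end.

Lemma incl_cone_restr f a :
  graph_aut adjV f -> incl (cone_restr f a) = f (incl a).
Proof.
move=> autf; rewrite /cone_restr; case: pselect => [H | nH].
  exact: projT2 (cid H).
case: (apex_or_incl (f (incl a))) => [fa | [b fa]]; last by case: nH; exists b.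
have [[g fK _] _] := autf.
case: (incl_neq_apex a).
by rewrite -[incl a]fK fa -{1}(graph_aut_fix_apex f autf) fK.
Qed.

Definition cone_extend (h : W -> W) (w : V) : V :=
  match pselect (exists a, incl a = w) with
  | left H => incl (h (projT1 (cid H)))
  | right _ => w
  end.

Lemma cone_extend_incl h a : cone_extend h (incl a) = incl (h a).
Proof.
rewrite /cone_extend; case: pselect => [H | nH]; last by case: nH; exists a.
by have /incl_inj -> := projT2 (cid H).
Qed.

Lemma cone_extend_apex h : cone_extend h apex = apex.
Proof.
rewrite /cone_extend; case: pselect => // H.
by case: (incl_neq_apex (projT1 (cid H))); rewrite (projT2 (cid H)).
Qed.

Lemma graph_aut_cone_restr f :
  graph_aut adjV f -> graph_aut adjW (cone_restr f).
Proof.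
move=> autf; have [[g fK gK] adjf] := autf.
have autg := graph_aut_can autf fK gK.
split.
  by exists (cone_restr g) => a; apply: incl_inj;
    rewrite !incl_cone_restr // ?fK ?gK.
by move=> a b; rewrite -!adj_incl !incl_cone_restr //; exact: adjf.
Qed.

Lemma graph_aut_cone_extend h :
  graph_aut adjW h -> graph_aut adjV (cone_extend h).
Proof.
move=> [[g hK gK] adjh]; split.
  by exists (cone_extend g) => w; case: (apex_or_incl w) => [-> | [a ->]];
    rewrite ?cone_extend_apex ?cone_extend_incl ?hK ?gK.
move=> w1 w2; case: (apex_or_incl w1) => [-> | [a ->]];
  case: (apex_or_incl w2) => [-> | [b ->]];
  rewrite ?cone_extend_apex ?cone_extend_incl.
- by [].
- by rewrite !adj_apexl; split=> _; apply: incl_neq_apex.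
- by rewrite !adj_apexr; split=> _; apply: incl_neq_apex.
- by rewrite !adj_incl; exact: adjh.
Qed.

Lemma cone_aut_groups_isomorphic : aut_groups_isomorphic adjV adjW.
Proof.
exists cone_restr; split.
- exact: graph_aut_cone_restr.
- move=> f g autf autg fg; apply: funext => w.
  case: (apex_or_incl w) => [-> | [a ->]].
    by rewrite !graph_aut_fix_apex.
  by rewrite -!incl_cone_restr // fg.
- move=> h auth; exists (cone_extend h); first exact: graph_aut_cone_extend.
  apply: funext => a; apply: incl_inj.
  by rewrite incl_cone_restr ?cone_extend_incl //; exact: graph_aut_cone_extend.
- move=> f g autf autg; apply: funext => a; apply: incl_inj => /=.
  by rewrite !incl_cone_restr //; exact: graph_aut_comp.
Qed.

End ConeOverGraph.

Lemma is_cut_setC {X : topologicalType} (P : set (set X)) :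
  is_cut P -> exists2 U, clopen U & P = [set U; ~` U].
Proof.
move=> [U [V [-> cU _ UV UVT]]]; exists U => //.
suff -> : V = ~` U by [].
apply/seteqP; split => x /=.
  by move=> Vx Ux; have : (U `&` V) x by []; rewrite UV.
by move=> nUx; have [/nUx []|//] : (U `|` V) x by rewrite UVT.
Qed.

Lemma is_cut_clopen {X : topologicalType} (U : set X) :
  clopen U -> is_cut [set U; ~` U].
Proof.
move=> cU; exists U, (~` U); split => //; last by rewrite setUCr.
- exact: clopenC.
- by rewrite setICr.
Qed.

Lemma cut_not_cross_self {X : topologicalType} {P : set (set X)} :
  is_cut P -> ~ cuts_cross P P.
Proof.
move=> /is_cut_setC [U _ ->] /(_ U (~` U) (or_introl erefl) (or_intror erefl)).
by rewrite setICr => -[].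
Qed.

Lemma cuts_cross_sym {X : Type} (P Q : set (set X)) :
  cuts_cross P Q -> cuts_cross Q P.
Proof. by move=> PQ A B QA PB; rewrite setIC; exact: PQ. Qed.

Lemma nonperipheral_weakly_nonperipheral {X : topologicalType} (E2 : set X)
    {P : set (set X)} :
  nonperipheral_cut P -> weakly_nonperipheral_cut E2 P.
Proof. by move=> [cP P2]; split => // A PA; left; exact: P2. Qed.

Lemma has_two_points_setC1 {X : Type} (k : X) {n} {f : 'I_n.+3 -> X} :
  injective f -> has_two_points (~` [set k]).
Proof.
move=> f_inj.
have fD (i j : 'I_n.+3) : val i != val j -> f i <> f j.
  by move=> /eqP ij /f_inj eij; apply: ij; rewrite eij.
pose i0 := @Ordinal n.+3 0 isT; pose i1 := @Ordinal n.+3 1 isT.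
pose i2 := @Ordinal n.+3 2 isT.
have [f01 f02 f12] : [/\ f i0 <> f i1, f i0 <> f i2 & f i1 <> f i2].
  by split; exact: fD.
have [f0k | f0k] := pselect (f i0 = k).
  by exists (f i1), (f i2); split => // e; [apply: f01 | apply: f02]; rewrite f0k e.
have [f1k | f1k] := pselect (f i1 = k).
  by exists (f i0), (f i2); split => // e; apply: f12; rewrite f1k e.
by exists (f i0), (f i1).
Qed.

Lemma clopen_split {X : topologicalType} {U : set X} :
  totally_disconnected [set: X] -> clopen U -> has_two_points U ->
  exists A : set X, [/\ clopen A, A `<=` U, A !=set0 & U `\` A !=set0].
Proof.
move=> tdX [oU cU] [u1 [u2 [u12 Uu1 Uu2]]].
apply: contrapT => nosplit.
have U_connected : connected U.
  move=> B [b Bb] [C oC BC] [D cD BD].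
  apply/seteqP; split; first by rewrite BC; apply: subIsetl.
  move=> y Uy; apply: contrapT => nBy; apply: nosplit; exists B; split.
  - by split; [rewrite BC; apply: openI | rewrite BD; apply: closedI].
  - by rewrite BC; apply: subIsetl.
  - by exists b.
  - by exists y.
have := connected_component_max Uu1 (@subsetT _ U) U_connected.
by rewrite tdX // => /(_ u2 Uu2) /= u21; apply: u12.
Qed.

Lemma nonperipheral_cut_crossed {X : topologicalType} {P : set (set X)} :
  totally_disconnected [set: X] -> nonperipheral_cut P ->
  exists2 Q, nonperipheral_cut Q & cuts_cross P Q.
Proof.
move=> tdX [/is_cut_setC [U cU ->] P2].
have [A [cA AU [u1 Au1] [u2 [Uu2 nAu2]]]] :=
  clopen_split tdX cU (P2 U (or_introl erefl)).
have [B [cB BU [v1 Bv1] [v2 [nUv2 nBv2]]]] :=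
  clopen_split tdX (clopenC U cU) (P2 (~` U) (or_intror erefl)).
have nAv2 : ~ A v2 by move=> /AU.
have nBu2 : ~ B u2 by move=> /BU.
exists [set A `|` B; ~` (A `|` B)].
  split; first exact/is_cut_clopen/clopenU.
  move=> W [-> | ->].
  - exists u1, v1; split; [|by left|by right].
    by move=> u1v1; apply: (BU v1 Bv1); rewrite -u1v1; exact: AU.
  - by exists u2, v2; split => [u2v2|[]|[]] //; apply: nUv2; rewrite -u2v2.
move=> W1 W2 [-> | ->] [-> | ->].
- by exists u1; split => //; [exact: AU | left].
- by exists u2; split => // -[].
- by exists v1; split => //; [exact: BU | right].
- by exists v2; split => // -[].
Qed.

Lemma cut_adj_not_universal {X : topologicalType} (a : cut_vertex X) :
  totally_disconnected [set: X] -> exists2 b, b <> a & ~ cut_adj a b.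
Proof.
move=> tdX; have [Q Qnp aQ] := nonperipheral_cut_crossed tdX (proj2_sig a).
exists (exist _ Q Qnp) => [Qa | [_ /(_ aQ) //]].
by apply: (cut_not_cross_self (proj2_sig a).1); rewrite -{2}Qa.
Qed.

Section PointCut.
Context {X : topologicalType} (k : X).

Definition point_cut : set (set X) := [set [set k]; ~` [set k]].

Lemma point_cut_weakly_nonperipheral :
  accessible_space X -> open [set k] -> has_two_points (~` [set k]) ->
  weakly_nonperipheral_cut [set k] point_cut.
Proof.
move=> acX ok k'2; split.
  exact/is_cut_clopen/(conj ok)/accessible_closed_set1.
by move=> A [-> | ->]; [right; exists k | left].
Qed.

Lemma point_cut_not_nonperipheral : ~ nonperipheral_cut point_cut.
Proof.
move=> [_ /(_ [set k] (or_introl erefl)) [x [y [xy /= xk yk]]]].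
by apply: xy; rewrite xk yk.
Qed.

Lemma point_cut_compatible (Q : set (set X)) :
  is_cut Q -> cuts_compatible point_cut Q.
Proof.
move=> /is_cut_setC [U _ ->] cross.
have [_ [/= -> Uk]] := cross [set k] U (or_introl erefl) (or_introl erefl).
have [_ [/= -> /(_ Uk) //]] :=
  cross [set k] (~` U) (or_introl erefl) (or_intror erefl).
Qed.

Lemma weakly_nonperipheral_cases {P : set (set X)} :
  weakly_nonperipheral_cut [set k] P -> nonperipheral_cut P \/ P = point_cut.
Proof.
move=> [/is_cut_setC [U cU PU] Pw].
have set1_of_small A : P A -> ~ has_two_points A -> A = [set k].
  move=> PA A1; have [//|[_ [/= -> Ak]]] := Pw A PA.
  apply/seteqP; split => [y Ay | _ ->] //=.
  by apply: contrapT => yk; apply: A1; exists y, k.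
have [U2 | U1] := pselect (has_two_points U); last first.
  by right; rewrite PU (set1_of_small U _ U1) // PU; left.
have [U'2 | U'1] := pselect (has_two_points (~` U)); last first.
  have U'k : ~` U = [set k] by apply: set1_of_small U'1; rewrite PU; right.
  by right; rewrite PU /point_cut -U'k setCK setUC.
by left; split; rewrite PU; [exact: is_cut_clopen | move=> A [-> | ->]].
Qed.

End PointCut.

Section WeakCutComplex.
Context {X : topologicalType} {k : X}.
Hypothesis point_cut_weak : weakly_nonperipheral_cut [set k] (point_cut k).

Definition point_vertex : wcut_vertex [set k] := exist _ _ point_cut_weak.

Definition wcut_of_cut (a : cut_vertex X) : wcut_vertex [set k] :=
  exist _ _ (nonperipheral_weakly_nonperipheral [set k] (proj2_sig a)).

Lemma wcut_of_cut_inj : injective wcut_of_cut.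
Proof. by move=> [P p] [Q q] /(congr1 (@proj1_sig _ _)) /= PQ; exact: eq_exist. Qed.

Lemma wcut_of_cut_neq_point a : wcut_of_cut a <> point_vertex.
Proof.
move=> /(congr1 (@proj1_sig _ _)) /= a_point.
by apply: (point_cut_not_nonperipheral k); rewrite -a_point; exact: proj2_sig.
Qed.

Lemma wcut_vertexP w : w = point_vertex \/ exists a, w = wcut_of_cut a.
Proof.
case: w => P p; have [Pnp | Ppoint] := weakly_nonperipheral_cases k p.
  by right; exists (exist _ P Pnp); exact: eq_exist.
by left; exact: eq_exist.
Qed.

Lemma wcut_adj_wcut_of_cut a b :
  wcut_adj (wcut_of_cut a) (wcut_of_cut b) <-> cut_adj a b.
Proof.
split=> -[ab compat]; split=> // [eab]; first by apply: ab; rewrite eab.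
exact/ab/wcut_of_cut_inj.
Qed.

Lemma wcut_adj_point_l w : wcut_adj point_vertex w <-> w <> point_vertex.
Proof.
split=> [[pw _] wp | wp]; first exact: pw.
by split=> [pw | ]; [exact: wp | exact/point_cut_compatible/(proj2_sig w).1].
Qed.

Lemma wcut_adj_point_r w : wcut_adj w point_vertex <-> w <> point_vertex.
Proof.
split=> [[] // | wp]; split=> // /cuts_cross_sym.
exact/point_cut_compatible/(proj2_sig w).1.
Qed.

End WeakCutComplex.

Theorem mainTheorem3 (X : topologicalType) (hX : stone_space X)
  (h5 : exists f : 'I_5 -> X, injective f)
  (k : X) (hk : open [set k]) :
  aut_groups_isomorphic (@wcut_adj X [set k]) (@cut_adj X).
Proof.
have [_ /hausdorff_accessible acX tdX] := hX.
have [f f_inj] := h5.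
have k_weak :=
  point_cut_weakly_nonperipheral k acX hk (has_two_points_setC1 k f_inj).
apply: (cone_aut_groups_isomorphic (@wcut_of_cut_inj X k)
  (wcut_of_cut_neq_point k_weak) (wcut_vertexP k_weak)
  (@wcut_adj_wcut_of_cut X k) (wcut_adj_point_l k_weak)
  (wcut_adj_point_r k_weak)).
by move=> a; exact: cut_adj_not_universal.
Qed.
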